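(* For every positive integer $n$, the lattice $\widetilde\Pi(D_n)$ does not contain a sublattice isomorphic to the diamond lattice $M_3$.
   Context: For a positive integer $n$, $D_n=\langle r,s\mid r^n=e,\ s^2=e,\ srs^{-1}=r^{-1}\rangle$ is the dihedral group of order $2n$. For a finite group $G$ and a subgroup $H\le G$, let $\pi_e(H)=\{o(x)\mid x\in H\}$. Let $\mathcal{L}(G)$ be the set of subgroups of $G$; define $H_1\equiv H_2$ iff $\pi_e(H_1)=\pi_e(H_2)$, with class $[H]$. The poset $\widetilde\Pi(G)$ is $\mathcal{L}(G)/\!\equiv$ ordered by $[H_1]\lesssim[H_2]$ iff $\pi_e(H_1)\subseteq\pi_e(H_2)$; for $G=D_n$ it is a lattice. $M_3$ is the five-element lattice consisting of a bottom, a top, and three pairwise incomparable elements between them. *)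

From mathcomp Require Import all_boot all_fingroup.
Set Implicit Arguments.
Unset Strict Implicit.
Unset Printing Implicit Defensive.
Local Open Scope group_scope.

Section PiTilde.
Variable gT : finGroupType.

Definition pie (H : {set gT}) : pred nat := fun k => [exists x in H, #[x] == k].

Definition pi_le (H K : {set gT}) : Prop := {subset pie H <= pie K}.

Definition pi_eq (H K : {set gT}) : Prop := pie H =i pie K.

Definition pi_join (G : {group gT}) (A B C : {group gT}) : Prop :=
  [/\ C \subset G, pi_le A C, pi_le B C &
      forall K : {group gT}, K \subset G -> pi_le A K -> pi_le B K -> pi_le C K].

Definition pi_meet (G : {group gT}) (A B C : {group gT}) : Prop :=
  [/\ C \subset G, pi_le C A, pi_le C B &
      forall K : {group gT}, K \subset G -> pi_le K A -> pi_le K B -> pi_le K C].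

Definition has_M3_sublattice (G : {group gT}) : Prop :=
  exists B X1 X2 X3 T : {group gT},
    [/\ [/\ B \subset G, X1 \subset G, X2 \subset G, X3 \subset G & T \subset G],
        [/\ ~ pi_eq X1 X2, ~ pi_eq X1 X3 & ~ pi_eq X2 X3],
        [/\ pi_join G X1 X2 T, pi_join G X1 X3 T & pi_join G X2 X3 T] &
        [/\ pi_meet G X1 X2 B, pi_meet G X1 X3 B & pi_meet G X2 X3 B]].

End PiTilde.

From mathcomp Require Import all_boot all_fingroup all_solvable.

(* Write D_n = <x> <*> <y> with y a reflection.  A subgroup H has as element
   orders the divisors of d = |H :&: <x>|, together with 2 when H contains a
   reflection, so the classes of Pi~(D_n) are pairs (d, b) with d | n,
   normalised by d <> 2 and (2 | d -> b).  Joins are (lcm, ||) and meets have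
   the order set of (gcd, &&).  In a copy of M3 the three flags b_i must agree,
   so the three atoms d_i are distinct with a common pairwise lcm; since
   lcm * gcd is the product, their pairwise gcds are distinct as well.  Yet
   all three gcds have the order set of the bottom, and distinct numbers can
   share an order set only if one of them is 2: impossible for three. *)

Set Implicit Arguments.
Unset Strict Implicit.
Unset Printing Implicit Defensive.

(* (d, b) stands for the divisors of d, plus 2 when b: the element orders of a
   subgroup whose rotations form a group of order d and which contains a
   reflection iff b. *)
Definition spec_orders (s : nat * bool) : pred nat :=
  [pred k | (k %| s.1) || s.2 && (k == 2)].

Definition spec_le (s t : nat * bool) : Prop := {subset spec_orders s <= spec_orders t}.

Definition spec_join (N : nat) (s s' t : nat * bool) : Prop :=
  [/\ spec_le s t, spec_le s' t &
      forall r, r.1 %| N -> spec_le s r -> spec_le s' r -> spec_le t r].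

Definition spec_meet (N : nat) (s s' b : nat * bool) : Prop :=
  [/\ spec_le b s, spec_le b s' &
      forall r, r.1 %| N -> spec_le r s -> spec_le r s' -> spec_le r b].

Definition spec_closed (s : nat * bool) : bool := (2 %| s.1) ==> s.2.

Definition spec_normal (s : nat * bool) : bool := (s.1 != 2) && spec_closed s.

(* (2, b) has the order set of (1, true), and an even d already yields 2. *)
Definition spec_norm (s : nat * bool) : nat * bool :=
  if s.1 == 2 then (1, true) else (s.1, s.2 || (2 %| s.1)).

Lemma spec_orders_norm (s : nat * bool) : spec_orders (spec_norm s) =i spec_orders s.
Proof.
case: s => d b; rewrite /spec_norm /=; case: eqP => [-> | _] k; rewrite !inE /=.
  by rewrite dvdn1; case: k => [|[|[|k]]]; rewrite ?andbF.
by case: (eqVneq k 2) => [->|]; rewrite ?andbT ?andbF //; case: (2 %| d); rewrite ?orbF.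
Qed.

Lemma spec_norm_normal (s : nat * bool) : spec_normal (spec_norm s).
Proof.
case: s => d b; rewrite /spec_normal /spec_closed /spec_norm /=.
by case: ifP => /= [_ | ->] //; apply/implyP => ->; rewrite orbT.
Qed.

Lemma spec_norm_dvd (s : nat * bool) : (spec_norm s).1 %| s.1.
Proof. by rewrite /spec_norm; case: ifP; rewrite /= ?dvd1n. Qed.

Lemma spec_orders_two (s : nat * bool) : spec_closed s -> (2 \in spec_orders s) = s.2.
Proof.
move=> /implyP cs; rewrite inE /= eqxx andbT.
by case: (boolP (2 %| s.1)) => [/cs ->|].
Qed.

Lemma spec_closed_lcm (s s' : nat * bool) :
  spec_closed s -> spec_closed s' -> spec_closed (lcmn s.1 s'.1, s.2 || s'.2).
Proof.
move=> /implyP cs /implyP cs'; apply/implyP => /= two_lcm.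
have : 2 %| s.1 * s'.1 by rewrite (dvdn_trans two_lcm) // dvdn_lcm dvdn_mulr ?dvdn_mull.
by rewrite Euclid_dvdM // => /orP[/cs -> | /cs' ->]; rewrite ?orbT.
Qed.

Lemma spec_closed_gcd (s s' : nat * bool) :
  spec_closed s -> spec_closed s' -> spec_closed (gcdn s.1 s'.1, s.2 && s'.2).
Proof.
move=> /implyP cs /implyP cs'; apply/implyP => /=.
by rewrite dvdn_gcd => /andP[/cs -> /cs' ->].
Qed.

Lemma lcmn_neq2 a b : a != 2 -> b != 2 -> lcmn a b != 2.
Proof.
have dvd2_1 d : d %| 2 -> d != 2 -> d = 1.
  by case: d => [|[|[|d]]] // /dvdn_leq; rewrite ltnNge.
move=> a2 b2; apply/eqP => ab2.
have a1 : a = 1 by apply: dvd2_1; rewrite // -ab2 dvdn_lcml.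
have b1 : b = 1 by apply: dvd2_1; rewrite // -ab2 dvdn_lcmr.
by move: ab2; rewrite a1 b1.
Qed.

Lemma spec_le_dvd (s r : nat * bool) : s.1 != 2 -> spec_le s r -> s.1 %| r.1.
Proof.
move=> /negPf s2 le_sr; have := le_sr s.1.
by rewrite !inE dvdnn s2 /= andbF orbF; apply.
Qed.

Lemma spec_orders_inj (s s' : nat * bool) : s.1 != 2 -> s'.1 != 2 ->
  spec_orders s =i spec_orders s' -> s.1 = s'.1.
Proof.
by move=> s2 s'2 ss'; apply/eqP; rewrite eqn_dvd !spec_le_dvd // => k; rewrite ss'.
Qed.

Lemma spec_le_lcm (s s' r : nat * bool) :
  s.1 != 2 -> s'.1 != 2 -> spec_le s r -> spec_le s' r ->
  spec_le (lcmn s.1 s'.1, s.2 || s'.2) r.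
Proof.
move=> s2 s'2 le_sr le_s'r k; rewrite inE /= => /orP[k_lcm | /andP[/orP[] b2 k2]].
- have : k %| r.1 by rewrite (dvdn_trans k_lcm) // dvdn_lcm !spec_le_dvd.
  by rewrite inE => ->.
- by apply: le_sr; rewrite inE b2 k2 orbT.
by apply: le_s'r; rewrite inE b2 k2 orbT.
Qed.

Lemma spec_ordersI (s s' : nat * bool) k : spec_closed s -> spec_closed s' ->
  k \in spec_orders s -> k \in spec_orders s' ->
  k \in spec_orders (gcdn s.1 s'.1, s.2 && s'.2).
Proof.
move=> /implyP cs /implyP cs'; rewrite !inE /= dvdn_gcd.
case/orP=> [ks | /andP[b /eqP k2]]; case/orP=> [ks' | /andP[b' /eqP k2']].
- by rewrite ks ks'.
- by rewrite k2' b' cs ?orbT // -k2'.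
- by rewrite k2 b cs' ?orbT // -k2.
by rewrite k2 b b' orbT.
Qed.

Lemma spec_join_orders N (s s' t : nat * bool) : s.1 != 2 -> s'.1 != 2 ->
  s.1 %| N -> s'.1 %| N -> spec_join N s s' t ->
  spec_orders t =i spec_orders (lcmn s.1 s'.1, s.2 || s'.2).
Proof.
move=> s2 s'2 sN s'N [le_st le_s't t_min] k; apply/idP/idP; last first.
  by apply: spec_le_lcm.
move: k; apply: t_min; first by rewrite dvdn_lcm sN.
  move=> j; rewrite !inE /= => /orP[js | /andP[-> ->]]; last by rewrite orbT.
  by rewrite (dvdn_trans js) ?dvdn_lcml.
move=> j; rewrite !inE /= => /orP[js | /andP[-> ->]]; last by rewrite !orbT.
by rewrite (dvdn_trans js) ?dvdn_lcmr.
Qed.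

Lemma spec_meet_orders N (s s' b : nat * bool) : spec_closed s -> spec_closed s' ->
  s.1 %| N -> spec_meet N s s' b ->
  spec_orders b =i spec_orders (gcdn s.1 s'.1, s.2 && s'.2).
Proof.
move=> cs cs' sN [le_bs le_bs' b_max] k; apply/idP/idP => [kb | ].
  by apply: spec_ordersI (le_bs k kb) (le_bs' k kb).
move: k; apply: b_max; first exact: dvdn_trans (dvdn_gcdl _ _) sN.
  move=> j; rewrite !inE /= dvdn_gcd => /orP[/andP[-> _] // | /andP[/andP[-> _] ->]].
  by rewrite orbT.
move=> j; rewrite !inE /= dvdn_gcd => /orP[/andP[_ ->] // | /andP[/andP[_ ->] ->]].
by rewrite orbT.
Qed.

Lemma gcdn_lcmn_inj a b c : 0 < a ->
  lcmn a b = lcmn a c -> gcdn a b = gcdn a c -> b = c.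
Proof.
move=> a_gt0 lbc gbc; apply/eqP; rewrite -(eqn_pmul2l a_gt0).
by rewrite -[a * b]muln_lcm_gcd -[a * c]muln_lcm_gcd lbc gbc.
Qed.

Lemma gcdn_pairwise_neq a1 a2 a3 : 0 < a1 -> 0 < a2 -> 0 < a3 ->
  a1 != a2 -> a1 != a3 -> a2 != a3 ->
  lcmn a1 a2 = lcmn a1 a3 -> lcmn a1 a2 = lcmn a2 a3 ->
  [/\ gcdn a1 a2 != gcdn a1 a3, gcdn a1 a2 != gcdn a2 a3 & gcdn a1 a3 != gcdn a2 a3].
Proof.
move=> a1_gt0 a2_gt0 a3_gt0 ne12 ne13 ne23 l12_13 l12_23; split.
- exact: contra_neq (gcdn_lcmn_inj a1_gt0 l12_13) ne23.
- rewrite gcdnC; apply: contra_neq ne13; apply: gcdn_lcmn_inj a2_gt0 _.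
  by rewrite lcmnC.
rewrite gcdnC [gcdn a2 a3]gcdnC; apply: contra_neq ne12; apply: gcdn_lcmn_inj a3_gt0 _.
by rewrite lcmnC [lcmn a3 a2]lcmnC -l12_13.
Qed.

Lemma spec_orders_inj3 g1 g2 g3 c : g1 != g2 -> g1 != g3 ->
  spec_orders (g1, c) =i spec_orders (g2, c) ->
  spec_orders (g1, c) =i spec_orders (g3, c) -> g2 = g3.
Proof.
move=> ne12 ne13 e12 e13; have [g1_2 | g1_N2] := eqVneq g1 2.
  apply: (@spec_orders_inj (g2, c) (g3, c)); rewrite /= -?g1_2 1?eq_sym //.
  by move=> k; rewrite -e12 e13.
have eq2 g : g1 != g -> spec_orders (g1, c) =i spec_orders (g, c) -> g = 2.
  move=> ne e; apply/eqP; apply: contraNT ne => g_N2.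
  by apply/eqP; apply: (@spec_orders_inj (g1, c) (g, c)).
by rewrite (eq2 _ ne12 e12) (eq2 _ ne13 e13).
Qed.

Lemma spec_no_M3 N (b s1 s2 s3 t : nat * bool) : 0 < N ->
  spec_normal s1 -> spec_normal s2 -> spec_normal s3 ->
  s1.1 %| N -> s2.1 %| N -> s3.1 %| N ->
  s1 != s2 -> s1 != s3 -> s2 != s3 ->
  spec_join N s1 s2 t -> spec_join N s1 s3 t -> spec_join N s2 s3 t ->
  spec_meet N s1 s2 b -> spec_meet N s1 s3 b -> spec_meet N s2 s3 b -> False.
Proof.
move=> N_gt0 /andP[s1_2 c1] /andP[s2_2 c2] /andP[s3_2 c3] dvd1 dvd2 dvd3.
move=> ne12 ne13 ne23 j12 j13 j23 m12 m13 m23.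
have t12 := spec_join_orders s1_2 s2_2 dvd1 dvd2 j12.
have t13 := spec_join_orders s1_2 s3_2 dvd1 dvd3 j13.
have t23 := spec_join_orders s2_2 s3_2 dvd2 dvd3 j23.
have b12 := spec_meet_orders c1 c2 dvd1 m12.
have b13 := spec_meet_orders c1 c3 dvd1 m13.
have b23 := spec_meet_orders c2 c3 dvd2 m23.
have [e2 e3] : s2.2 = s1.2 /\ s3.2 = s1.2.
  have := spec_orders_two (spec_closed_lcm c1 c2); rewrite -t12.
  have := spec_orders_two (spec_closed_lcm c1 c3); rewrite -t13.
  have := spec_orders_two (spec_closed_lcm c2 c3); rewrite -t23.
  have := spec_orders_two (spec_closed_gcd c1 c2); rewrite -b12.
  have := spec_orders_two (spec_closed_gcd c1 c3); rewrite -b13.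
  have := spec_orders_two (spec_closed_gcd c2 c3); rewrite -b23 /=.
  by case: (2 \in spec_orders t) (2 \in spec_orders b) s1.2 s2.2 s3.2 => [] [] [] [] [].
clear c1 c2 c3 j12 j13 j23 m12 m13 m23.
case: s1 s2 s3 e2 e3 => [a1 c] [a2 _] [a3 _] /= -> -> in s1_2 s2_2 s3_2 dvd1 dvd2 dvd3
  ne12 ne13 ne23 t12 t13 t23 b12 b13 b23 *.
rewrite !xpair_eqE !eqxx !andbT in ne12 ne13 ne23.
have same_lcm u v : spec_orders t =i spec_orders (lcmn u v, c || c) ->
    u != 2 -> v != 2 -> lcmn a1 a2 = lcmn u v.
  move=> tuv u2 v2; apply: (@spec_orders_inj (_, c || c) (_, c || c)).
  - by rewrite /= lcmn_neq2.
  - by rewrite /= lcmn_neq2.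
  by move=> k; rewrite -t12 tuv.
have [l12_13 l12_23] := conj (same_lcm _ _ t13 s1_2 s3_2) (same_lcm _ _ t23 s2_2 s3_2).
have [g12_13 g12_23 g13_23] := gcdn_pairwise_neq (dvdn_gt0 N_gt0 dvd1)
  (dvdn_gt0 N_gt0 dvd2) (dvdn_gt0 N_gt0 dvd3) ne12 ne13 ne23 l12_13 l12_23.
by case/eqP: g13_23; apply: (@spec_orders_inj3 _ _ _ (c && c) g12_13 g12_23) => k;
  rewrite -b12; [exact: b13 | exact: b23].
Qed.

Local Open Scope group_scope.

Lemma order_expg_div (gT : finGroupType) (a : gT) k :
  k %| #[a] -> #[a ^+ (#[a] %/ k)] = k.
Proof. by move=> k_a; rewrite orderXdiv ?dvdn_div // divnA // mulKn. Qed.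

Lemma pie_cyclic (gT : finGroupType) (A : {group gT}) k :
  cyclic A -> (k \in pie A) = (k %| #|A|).
Proof.
move=> /cyclicP[a ->]; apply/existsP/idP => [[z /andP[az /eqP <-]] | k_a].
  exact: order_dvdG.
by exists (a ^+ (#[a] %/ k)); rewrite mem_cycle order_expg_div ?eqxx.
Qed.

Lemma pi_le_spec (gT : finGroupType) (A B : {set gT}) s t :
  pie A =i spec_orders s -> pie B =i spec_orders t -> pi_le A B <-> spec_le s t.
Proof.
by move=> As Bt; split=> le k; [rewrite -As -Bt; apply: le | rewrite As Bt; apply: le].
Qed.

Section SpectrumTransport.

Variables (gT : finGroupType) (G : {group gT}) (N : nat).
Variable spec : {set gT} -> nat * bool.
Hypothesis pie_spec : forall H : {group gT}, H \subset G -> pie H =i spec_orders (spec H).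
Hypothesis spec_realized :
  forall r, r.1 %| N -> exists2 K : {group gT}, K \subset G & pie K =i spec_orders r.

Lemma pi_join_spec (A B C : {group gT}) : A \subset G -> B \subset G ->
  pi_join G A B C -> spec_join N (spec A) (spec B) (spec C).
Proof.
move=> sAG sBG [sCG AC BC C_min]; split.
- exact/(pi_le_spec (pie_spec sAG) (pie_spec sCG)).
- exact/(pi_le_spec (pie_spec sBG) (pie_spec sCG)).
move=> r /spec_realized[K sKG Kr] Ar Br; apply/(pi_le_spec (pie_spec sCG) Kr).
by apply: C_min; [| apply/(pi_le_spec (pie_spec sAG) Kr)
                   | apply/(pi_le_spec (pie_spec sBG) Kr)].
Qed.

Lemma pi_meet_spec (A B C : {group gT}) : A \subset G -> B \subset G ->
  pi_meet G A B C -> spec_meet N (spec A) (spec B) (spec C).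
Proof.
move=> sAG sBG [sCG CA CB C_max]; split.
- exact/(pi_le_spec (pie_spec sCG) (pie_spec sAG)).
- exact/(pi_le_spec (pie_spec sCG) (pie_spec sBG)).
move=> r /spec_realized[K sKG Kr] rA rB; apply/(pi_le_spec Kr (pie_spec sCG)).
by apply: C_max; [| apply/(pi_le_spec Kr (pie_spec sAG))
                   | apply/(pi_le_spec Kr (pie_spec sBG))].
Qed.

Hypotheses (N_gt0 : 0 < N)
  (spec_normal_sub : forall H : {group gT}, H \subset G -> spec_normal (spec H))
  (spec_dvd : forall H : {group gT}, H \subset G -> (spec H).1 %| N).

Lemma spec_no_M3_sublattice : ~ has_M3_sublattice G.
Proof.
case=> B [X1 [X2 [X3 [T [[sB s1 s2 s3 sT] [n12 n13 n23] [j12 j13 j23] [m12 m13 m23]]]]]].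
have spec_neq (H K : {group gT}) :
    H \subset G -> K \subset G -> ~ pi_eq H K -> spec H != spec K.
  move=> sH sK HK; apply/eqP => eHK; apply: HK => k.
  by rewrite (pie_spec sH) (pie_spec sK) eHK.
apply: (spec_no_M3 N_gt0 (spec_normal_sub s1) (spec_normal_sub s2) (spec_normal_sub s3)
          (spec_dvd s1) (spec_dvd s2) (spec_dvd s3)
          (spec_neq _ _ s1 s2 n12) (spec_neq _ _ s1 s3 n13) (spec_neq _ _ s2 s3 n23)
          (pi_join_spec s1 s2 j12) (pi_join_spec s1 s3 j13) (pi_join_spec s2 s3 j23)
          (pi_meet_spec s1 s2 m12) (pi_meet_spec s1 s3 m13) (pi_meet_spec s2 s3 m23)).
Qed.

End SpectrumTransport.

Lemma order_eq2 (gT : finGroupType) (z : gT) : z ^+ 2 = 1 -> z != 1 -> #[z] = 2.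
Proof. by move=> z2 z1; apply/prime_nt_dvdP; rewrite ?order_eq1 ?order_dvdn ?z2. Qed.

Section DihedralGroup.

Variables (gT : finGroupType) (x y : gT).
Hypotheses (y2 : y ^+ 2 = 1) (xy : x ^ y = x^-1) (yNx : y \notin <[x]>).

Lemma conjg_cycle_inv a : a \in <[x]> -> a ^ y = a^-1.
Proof. by case/cycleP=> k ->; rewrite conjXg xy expgVn. Qed.

Lemma cycle_norm_reflection a : a \in <[x]> -> <[y]> \subset 'N(<[a]>).
Proof. by move=> xa; rewrite norms_cycle conjg_cycle_inv // groupV cycle_id. Qed.

Lemma order_reflection z : z ^+ 2 = 1 -> z \notin <[x]> -> #[z] = 2.
Proof.
move=> z2 zNx; apply: order_eq2 z2 _; apply: contraNneq zNx => ->; exact: group1.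
Qed.

Lemma order_dih_reflection z : z \in <[x]> <*> <[y]> -> z \notin <[x]> -> #[z] = 2.
Proof.
rewrite norm_joinEr ?cycle_norm_reflection ?cycle_id // => /mulsgP[a b xa yb ->{z}].
have : b \in [set 1; y] by rewrite -(cycle2g (order_reflection y2 yNx)).
rewrite !inE => /orP[] /eqP->; first by rewrite mulg1 xa.
apply: order_reflection; have yV : y^-1 = y by rewrite -[y^-1]mulg1 -y2 expgS expg1 mulKg.
have -> : (a * y) ^+ 2 = a * a ^ y by rewrite expgS expg1 conjgE yV !mulgA.
by rewrite conjg_cycle_inv // mulgV.
Qed.

Definition dih_spec (H : {set gT}) : nat * bool :=
  spec_norm (#|H :&: <[x]>|, ~~ (H \subset <[x]>)).

Lemma pie_dih (H : {group gT}) :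
  H \subset <[x]> <*> <[y]> -> pie H =i spec_orders (dih_spec H).
Proof.
move=> sHD k; rewrite spec_orders_norm inE /=.
rewrite -pie_cyclic ?(cyclicS (subsetIr H _) (cycle_cyclic x)) //.
apply/existsP/idP => [[z /andP[Hz /eqP <-{k}]] | ].
  have [xz | zNx] := boolP (z \in <[x]>).
    by apply/orP; left; apply/existsP; exists z; rewrite inE Hz xz eqxx.
  apply/orP; right; rewrite order_dih_reflection ?(subsetP sHD) // eqxx andbT.
  by apply/subsetPn; exists z.
case/orP=> [/existsP[z /andP[] /setIP[Hz _] ok] | /andP[/subsetPn[z Hz zNx] /eqP->]].
  by exists z; rewrite Hz.
by exists z; rewrite Hz order_dih_reflection ?(subsetP sHD).
Qed.

Lemma dih_spec_dvd (H : {group gT}) : (dih_spec H).1 %| #[x].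
Proof. by rewrite /dih_spec (dvdn_trans (spec_norm_dvd _)) ?cardSg ?subsetIr. Qed.

Lemma dih_spec_realized r : r.1 %| #[x] ->
  exists2 K : {group gT}, K \subset <[x]> <*> <[y]> & pie K =i spec_orders r.
Proof.
case: r => d b /= d_x; set A := <[x ^+ (#[x] %/ d)]>%G.
have oA : #|A| = d by rewrite -orderE order_expg_div.
have sAx : A \subset <[x]> := cycleX x _.
have spec_eq (K : {group gT}) c : K \subset <[x]> <*> <[y]> ->
    (#|K :&: <[x]>|, ~~ (K \subset <[x]>)) = (d, c) -> pie K =i spec_orders (d, c).
  by move=> sKD eK k; rewrite pie_dih // /dih_spec spec_orders_norm eK.
have sAD : A \subset <[x]> <*> <[y]> := subset_trans sAx (joing_subl _ _).
case: b.
  have sKD : A <*> <[y]> \subset <[x]> <*> <[y]> by rewrite join_subG sAD joing_subr.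
  exists (A <*> <[y]>)%G => //; apply: spec_eq => //; congr (_, _).
    rewrite /= norm_joinEr ?cycle_norm_reflection ?mem_cycle // -group_modl //.
    by rewrite prime_TIg ?mulg1 ?cycle_subG // -orderE order_reflection.
  by apply: contra yNx => sKx; rewrite -cycle_subG (subset_trans (joing_subr A _)).
by exists A => //; apply: spec_eq; rewrite // (setIidPl sAx) oA sAx.
Qed.

End DihedralGroup.

Lemma dihedral_no_M3_sublattice (gT : finGroupType) (G : {group gT}) (x y : gT) :
  y ^+ 2 = 1 -> x ^ y = x^-1 -> y \notin <[x]> -> G :=: <[x]> <*> <[y]> ->
  ~ has_M3_sublattice G.
Proof.
move=> y2 xy yNx defG.
have pie_spec (H : {group gT}) : H \subset G -> pie H =i spec_orders (dih_spec x H).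
  by rewrite defG; apply: pie_dih.
have realized r : r.1 %| #[x] ->
    exists2 K : {group gT}, K \subset G & pie K =i spec_orders r.
  by case/(dih_spec_realized y2 xy yNx) => K; rewrite -defG; exists K.
exact: (spec_no_M3_sublattice pie_spec realized (order_gt0 x)
          (fun H _ => spec_norm_normal _) (fun H _ => dih_spec_dvd x H)).
Qed.

Lemma card_Grp_dihedral n (gT : finGroupType) (G : {group gT}) : 1 < n ->
  G \isog Grp (r : s : r ^+ n, s ^+ 2, r ^ s = r^-1) -> #|G| = n.*2.
Proof.
move=> n_gt1 isoG; apply/eqP; rewrite -(card_dihedral n_gt1) eqn_dvd !card_homg //.
  by rewrite isoG (isoGrp_hom (Grp_dihedral n_gt1)).
by move: (isoGrp_hom isoG); rewrite -(Grp_dihedral n_gt1).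
Qed.

Lemma trivg_no_M3_sublattice (gT : finGroupType) (G : {group gT}) :
  G :=: 1 -> ~ has_M3_sublattice G.
Proof.
move=> G1 [B [X1 [X2 [X3 [T [[_ s1 s2 _ _] [n12 _ _] _ _]]]]]]; apply: n12.
by move: s1 s2; rewrite G1 => /trivGP-> /trivGP->.
Qed.

Theorem theorem2p8 (n : nat) (gT : finGroupType) (G : {group gT}) :
  0 < n ->
  G \isog Grp (r : s : r ^+ n, s ^+ 2, r ^ s = r^-1) ->
  ~ has_M3_sublattice G.
Proof.
move=> n_gt0 isoG.
have /existsP[[x y] /=] := isoGrp_hom isoG.
rewrite !xpair_eqE => /and4P[/eqP defG /eqP xn /eqP y2 /eqP xy].
have [yx | yNx] := boolP (y \in <[x]>); last exact: dihedral_no_M3_sublattice yNx _.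
have Gx : G :=: <[x]> by rewrite -defG; apply/joing_idPl; rewrite cycle_subG.
have x_n : #[x] %| n by rewrite order_dvdn xn.
have [n1 | n_gt1] := leqP n 1.
  apply: trivg_no_M3_sublattice; rewrite Gx; apply/eqP; rewrite cycle_eq1 -order_eq1.
  by rewrite -dvdn1 (dvdn_trans x_n) // dvdn1 eqn_leq n1.
have := card_Grp_dihedral n_gt1 isoG; rewrite Gx -orderE => oG.
by move: (dvdn_leq n_gt0 x_n); rewrite oG -mul2n leqNgt ltn_Pmull.
Qed.
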